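(* Let $d\ge 1$ and $\ell\ge 3$ be integers. The number of arcs of the cyclic Kautz digraph $CK(d,\ell)$ is $$(d+1)d^{\ell}-(2d-1)\big((-1)^{\ell-1}d+d^{\ell-1}\big).$$
   Context: Let $\Sigma=\{0,1,\dots,d\}$ be an alphabet of $d+1$ symbols. The cyclic Kautz digraph $CK(d,\ell)$ has as vertices all sequences $a_1a_2\ldots a_\ell\in\Sigma^\ell$ with $a_i\neq a_{i+1}$ for $1\le i\le \ell-1$ and $a_1\neq a_\ell$. There is an arc from $a_1\ldots a_\ell$ to $b_1\ldots b_\ell$ if and only if both are vertices and $b_i=a_{i+1}$ for $1\le i\le \ell-1$. *)

From HB Require Import structures.
From mathcomp Require Import all_boot all_order all_algebra.
Set Implicit Arguments. Unset Strict Implicit. Unset Printing Implicit Defensive.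

(* Alphabet Sigma = {0,...,d} is 'I_d.+1; a word a_1...a_l is an l.-tuple,
   with a_{i+1} stored at index i (0-based). *)

Definition ck_vertex (d l : nat) (a : l.-tuple 'I_d.+1) : bool :=
  [forall i : 'I_l, forall j : 'I_l, (val j == (val i).+1) ==> (tnth a i != tnth a j)]
  && [forall i : 'I_l, forall j : 'I_l,
        ((val i == 0) && (val j == l.-1)) ==> (tnth a i != tnth a j)].

Definition ck_arc (d l : nat) (a b : l.-tuple 'I_d.+1) : bool :=
  [&& ck_vertex a, ck_vertex b &
      [forall i : 'I_l, forall j : 'I_l, (val j == (val i).+1) ==> (tnth b i == tnth a j)]].

Definition ck_arcs (d l : nat) : {set (l.-tuple 'I_d.+1 * l.-tuple 'I_d.+1)} :=
  [set p | ck_arc p.1 p.2].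

From mathcomp Require Import all_boot all_order all_algebra.
From mathcomp Require Import ring.
Set Implicit Arguments.
Unset Strict Implicit.
Unset Printing Implicit Defensive.

Import GRing.Theory Num.Theory.
Local Open Scope ring_scope.

(* An arc a -> b of CK(d,l) is the same thing as a word w_0 ... w_l whose first
   l letters and last l letters both form cycles for the relation <>. Writing
   w = x y r z, this says that y r is a walk of length l - 2 in the complete
   graph K_(d+1), from y to some v, and that x and z both avoid {y, v}: there
   are d - [y <> v] choices for each. The adjacency matrix of K_(d+1) has
   eigenvalues d and -1, which gives the number W of such walks through
   (d+1) W = d^(l-2) + (d [y = v] - [y <> v]) (-1)^(l-2); summing
   W (d - [y <> v])^2 over y and v yields the formula. *)

Section TupleSums.
Variables (T : finType) (R : nmodType).

Lemma big_tuple0 (F : 0.-tuple T -> R) : \sum_(t : 0.-tuple T) F t = F [tuple].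
Proof. by rewrite (big_pred1 [tuple]) // => t /=; apply/esym/eqP; apply: tuple0. Qed.

Lemma big_tuple_cons n (F : n.+1.-tuple T -> R) :
  \sum_(t : n.+1.-tuple T) F t = \sum_(x : T) \sum_(t : n.-tuple T) F [tuple of x :: t].
Proof.
rewrite pair_big /= (reindex (fun p : T * n.-tuple T => [tuple of p.1 :: p.2])) //=.
exists (fun t => (thead t, [tuple of behead t])) => [[x t] _ | t _] /=.
  by rewrite theadE; congr pair; apply: val_inj.
by rewrite -tuple_eta.
Qed.

Lemma big_tuple_rcons n (F : seq T -> R) :
  \sum_(t : n.+1.-tuple T) F t = \sum_(t : n.-tuple T) \sum_(z : T) F (rcons t z).
Proof.
elim: n F => [|n IH] F; rewrite big_tuple_cons.
  by rewrite big_tuple0; apply: eq_bigr => x _; rewrite big_tuple0.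
rewrite (big_tuple_cons (fun s => \sum_z F (rcons s z))).
by apply: eq_bigr => x _; rewrite (IH (fun s => F (x :: s))).
Qed.

End TupleSums.

Section Sequences.
Variable A : Type.

Lemma nth_belast (x0 x : A) s i : (i < size s)%N -> nth x0 (belast x s) i = nth x0 (x :: s) i.
Proof. by move=> Hi; rewrite [x :: s]lastI nth_rcons size_belast Hi. Qed.

Lemma forall_succP l (a b : l.-tuple A) x0 (r : rel A) :
  reflect (forall i, i.+1 < l -> r (nth x0 a i) (nth x0 b i.+1))%N
    [forall i : 'I_l, forall j : 'I_l, (val j == (val i).+1) ==> r (tnth a i) (tnth b j)].
Proof.
apply: (iffP forallP) => [H i Hi | H i].
  have := forallP (H (Ordinal (ltnW Hi))) (Ordinal Hi).
  by rewrite eqxx !(tnth_nth x0).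
apply/forallP => j; apply/implyP => /eqP Hj; rewrite !(tnth_nth x0) Hj.
by apply: H; rewrite -Hj ltn_ord.
Qed.

End Sequences.

Section CompleteGraphWalks.
Variable T : finType.
Local Notation ne := (fun x y : T => x != y).
Local Notation N := (#|T|%:R : int).

Definition walks n (x y : T) : int :=
  \sum_(t : n.-tuple T) (path ne x t && (last x t == y))%:R.

Lemma walks0 x y : walks 0 x y = (x == y)%:R.
Proof. by rewrite /walks big_tuple0. Qed.

Lemma walksS n x y : walks n.+1 x y = \sum_(z | z != x) walks n z y.
Proof.
rewrite /walks big_tuple_cons [RHS]big_mkcond /=; apply: eq_bigr => z _.
by rewrite [z == x]eq_sym; case: (x != z); rewrite /= ?big1_eq.
Qed.

Lemma sumr_neq (R : zmodType) (x : T) (g : T -> R) : \sum_(z | z != x) g z = \sum_z g z - g x.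
Proof. by rewrite [\sum_z _](bigD1 x) //= addrC addrK. Qed.

Lemma sum1_neq (x : T) : \sum_(z | z != x) (1 : int) = N - 1.
Proof.
have T_gt0 : (0 < #|T|)%N by apply/card_gt0P; exists x.
by rewrite sumr_const cardC1 -[in RHS](prednK T_gt0) -natr1 addrK.
Qed.

Lemma walks_closed n x y :
  N * walks n x y = (N - 1) ^+ n + (if x == y then N - 1 else -1) * (-1) ^+ n.
Proof.
elim: n x => [|n IH] x.
  by rewrite walks0 !expr0 mulr1; case: (x == y); rewrite /= ?mulr1 ?mulr0; ring.
have sum_c : \sum_(z : T) (if z == y then N - 1 else -1) = 0.
  rewrite (bigD1 y) //= eqxx (eq_bigr (fun _ => -1 * 1)) => [|z /negPf ->]; last by rewrite mulr1.
  by rewrite -mulr_sumr sum1_neq; ring.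
rewrite walksS mulr_sumr (eq_bigr _ (fun z _ => IH z)) big_split /= -!mulr_suml.
rewrite (eq_bigr (fun _ => (N - 1) ^+ n * 1)) => [|z _]; last by rewrite mulr1.
rewrite -mulr_sumr sum1_neq sumr_neq sum_c !exprS; ring.
Qed.

Lemma sum_path_last n y (h : T -> int) :
  \sum_(t : n.-tuple T) (path ne y t)%:R * h (last y t) = \sum_v walks n y v * h v.
Proof.
under [RHS]eq_bigr do rewrite mulr_suml.
rewrite exchange_big /=; apply: eq_bigr => t _.
rewrite (bigD1 (last y t)) //= eqxx andbT big1 ?addr0 // => v.
by rewrite eq_sym => /negPf ->; rewrite andbF mul0r.
Qed.

Lemma sum_neq_neq y v : \sum_(x : T) ((x != y) && (x != v))%:R = N - 1 - (y != v)%:R.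
Proof.
rewrite (bigD1 y) //= eqxx add0r.
rewrite (eq_bigr (fun x => 1 - (x == v)%:R)) => [|x ->]; last by case: eqP; rewrite ?subrr ?subr0.
rewrite sumrB sum1_neq big_mkcond (bigD1 v) //= eqxx big1 => [|x /negPf ->]; last by case: ifP.
by rewrite addr0 [v == y]eq_sym; case: (y != v).
Qed.

End CompleteGraphWalks.

Section CyclicKautz.
Variable d : nat.
Local Notation T := 'I_d.+1.
Local Notation ne := (fun x y : T => x != y).

Lemma ck_vertexE l (a : l.-tuple T) : ck_vertex a = cycle ne a.
Proof.
case: l a => [|l] a.
  by rewrite [a]tuple0; apply/andP; split; apply/forallP => -[].
case: a => -[//|x s] /= /[dup] /eqP[size_s] Ha.
rewrite rcons_path /ck_vertex; congr andb.
  apply/(forall_succP _ _ x ne)/(pathP x) => H i Hi; first by apply: H; rewrite -size_s.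
  by apply: H; rewrite size_s.
apply/forallP/idP => [H | last_x i].
  have := forallP (H ord0) ord_max; rewrite /= !(tnth_nth x) /= eqxx.
  by rewrite -size_s nth_last eq_sym.
apply/forallP => j; apply/implyP => /andP[/eqP i0 /eqP jl].
by rewrite !(tnth_nth x) i0 jl /= -size_s nth_last eq_sym.
Qed.

Definition arc_of_word l (w : l.+2.-tuple T) : l.+1.-tuple T * l.+1.-tuple T :=
  (belast_tuple (thead w) (behead_tuple w), behead_tuple w).

Definition ck_arc_word (w : seq T) : bool :=
  if w is x :: s then cycle ne (belast x s) && cycle ne s else false.

Lemma ck_arc_of_word l (w : l.+2.-tuple T) :
  ck_arc (arc_of_word w).1 (arc_of_word w).2 = ck_arc_word w.
Proof.
rewrite /ck_arc !ck_vertexE [in RHS](tuple_eta w) /=.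
suff -> : [forall i : 'I_l.+1, forall j : 'I_l.+1, (val j == (val i).+1) ==>
   (tnth (behead_tuple w) i == tnth (belast_tuple (thead w) (behead_tuple w)) j)].
  by rewrite andbT.
apply/(forall_succP _ _ (thead w) eq_op) => i Hi /=.
by rewrite nth_belast ?size_behead ?size_tuple.
Qed.

Lemma arc_of_word_inj l : injective (@arc_of_word l).
Proof.
move=> w1 w2 [/(congr1 (nth (thead w1) ^~ 0)) head_eq tail_eq].
rewrite /= !nth_belast ?size_behead ?size_tuple //= in head_eq.
by apply: val_inj; rewrite /= [in LHS](tuple_eta w1) [in RHS](tuple_eta w2) /= head_eq tail_eq.
Qed.

Lemma ck_arcs_imset l :
  ck_arcs d l.+1 = @arc_of_word l @: [set w : l.+2.-tuple T | ck_arc_word w].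
Proof.
apply/setP => p; rewrite inE; apply/idP/imsetP => [|[w]]; last first.
  by rewrite inE -ck_arc_of_word => ? ->.
case: p => a b /= arc_ab.
have word_ab : arc_of_word (@cons_tuple _ _ (thead a) b) = (a, b).
  congr pair; apply: val_inj => //=; rewrite theadE.
  case/and3P: arc_ab => _ _ /(forall_succP _ _ (thead a) eq_op) shift.
  apply: (@eq_from_nth _ (thead a)) => [|i]; first by rewrite size_belast !size_tuple.
  rewrite size_belast size_tuple => Hi; rewrite nth_belast ?size_tuple //.
  case: i Hi => [|i] Hi /=; first exact: (tnth_nth (thead a) a ord0).
  by rewrite (eqP (shift i Hi)).
by exists (@cons_tuple _ _ (thead a) b); rewrite ?inE -?ck_arc_of_word word_ab.
Qed.

Lemma card_ck_arcs_words l :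
  (#|ck_arcs d l.+1|%:R : int) = \sum_(w : l.+2.-tuple T) (ck_arc_word w)%:R.
Proof.
rewrite ck_arcs_imset card_imset; last exact: arc_of_word_inj.
rewrite -sumr_const big_mkcond; apply: eq_bigr => w _.
by rewrite inE; case: ck_arc_word.
Qed.

Lemma ck_arc_word_split x y r z :
  ck_arc_word (x :: y :: rcons r z) =
  [&& x != y, path ne y r, last y r != x, last y r != z & z != y].
Proof.
rewrite /= belast_rcons /= !rcons_path last_rcons.
by case: (x != y); case: (path ne y r); case: (last y r != x).
Qed.

Lemma card_ck_arcs_walks n :
  (#|ck_arcs d n.+2|%:R : int) =
  \sum_(y : T) \sum_(v : T) walks n y v * (d%:R - (y != v)%:R) ^+ 2.
Proof.
rewrite card_ck_arcs_words.
transitivity (\sum_(x : T) \sum_(y : T) \sum_(r : n.-tuple T) \sum_(z : T)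
                (ck_arc_word (x :: y :: rcons r z))%:R : int).
  rewrite big_tuple_cons; apply: eq_bigr => x _.
  rewrite (big_tuple_cons (fun t => (ck_arc_word (x :: t))%:R : int)); apply: eq_bigr => y _.
  exact: (big_tuple_rcons n (fun t => (ck_arc_word (x :: y :: t))%:R : int)).
rewrite exchange_big; apply: eq_bigr => y _.
rewrite -sum_path_last exchange_big; apply: eq_bigr => r _.
case: (boolP (path ne y r)) => [path_r | /negPf no_path]; last first.
  by rewrite mul0r big1 // => x _; rewrite big1 // => z _; rewrite ck_arc_word_split no_path andbF.
set v := last y r.
transitivity ((\sum_(x : T) ((x != y) && (x != v))%:R) *
              (\sum_(z : T) ((z != v) && (z != y))%:R) : int).
  rewrite mulr_suml; apply: eq_bigr => x _; rewrite mulr_sumr; apply: eq_bigr => z _.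
  rewrite ck_arc_word_split path_r -/v -natrM mulnb (eq_sym v x) (eq_sym v z) /=.
  by rewrite !andbA.
by rewrite !sum_neq_neq card_ord -natr1 addrK mul1r expr2 (eq_sym v y).
Qed.

Lemma card_ck_arcs n :
  (#|ck_arcs d n.+2|%:R : int) =
  d%:R ^+ 2 * (d%:R ^+ n + d%:R * (-1) ^+ n)
  + d%:R * (d%:R - 1) ^+ 2 * (d%:R ^+ n - (-1) ^+ n).
Proof.
have card_T : (#|T|%:R : int) = d%:R + 1 by rewrite card_ord natr1.
have sum_from y : (d%:R + 1) * \sum_(v : T) walks n y v * (d%:R - (y != v)%:R) ^+ 2 =
    d%:R ^+ 2 * (d%:R ^+ n + d%:R * (-1) ^+ n)
    + d%:R * (d%:R - 1) ^+ 2 * (d%:R ^+ n - (-1) ^+ n).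
  rewrite mulr_sumr (bigD1 y) //= eqxx subr0 mulrA -card_T walks_closed eqxx.
  rewrite (eq_bigr (fun _ => (d%:R ^+ n - (-1) ^+ n) * (d%:R - 1) ^+ 2 * 1)) => [|v].
    by rewrite -mulr_sumr sum1_neq card_T addrK; ring.
  rewrite eq_sym => /negPf y_ne_v.
  by rewrite mulrA walks_closed y_ne_v card_T addrK /=; ring.
(* The closed form is known for (d+1) walks only, hence the cancellation. *)
apply: (@mulfI _ (d%:R + 1)); first by rewrite natr1 pnatr_eq0.
rewrite card_ck_arcs_walks mulr_sumr (eq_bigr _ (fun y _ => sum_from y)).
by rewrite sumr_const card_ord natr1 [RHS]mulr_natl.
Qed.

End CyclicKautz.

Theorem proposition2 (d l : nat) (hd : (1 <= d)%N) (hl : (3 <= l)%N) :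
  (#|ck_arcs d l|%:Z : int) =
  (d.+1)%:Z * (d%:Z) ^+ l
  - (2 * d%:Z - 1) * ((-1) ^+ l.-1 * d%:Z + (d%:Z) ^+ l.-1).
Proof.
case: l hl => [|[|n]] // _.
rewrite -!natz card_ck_arcs -natr1 !exprS /=; ring.
Qed.
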